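(* Let $\varepsilon>0$, let $k:\mathbb{R}\to\mathbb{R}$ be $C^1$ with $k^{-1}(0)=\{0\}$ and $k'(0)>0$, and let $b_0,b_1,c:\mathbb{R}\to\mathbb{R}$ be $C^\infty$ with $b_1>0$, $b_1'<0$, $c>0$ and $c'(u)/c(u)>b_1'(u)/b_1(u)$ for all $u$. Put $b(u,a)=b_0(u)-ab_1(u)$, $h(u,a)=b(u,a)/c(u)$, and assume that for every $a\in\mathbb{R}$ the function $h(\cdot,a)$ has finitely many critical points, all isolated, and that $h(u,a)\to-\infty$ as $|u|\to\infty$ for every $a\ge 0$. Consider for each $a\in\mathbb{R}$ the reduced vector field $\widetilde f(\cdot,a)$ on $\mathbb{R}^2$, $$\widetilde f((u,n),a)=\Big(\varepsilon\big(\partial_u b(u,a)-c'(u)n\big),\ \tfrac{1}{\widetilde{k}(n)}\big(b(u,a)-c(u)n\big)\Big),$$ with $\widetilde{k}(n)=k(n)/n$ for $n\ne0$, $\widetilde k(0)=k'(0)$, and its flow $\widetilde{\phi}^a$. Let $\mathcal{P}=\{(x,a)\in\mathbb{R}^2\times\mathbb{R}\mid \widetilde f(x,a)=0\}=\{((u,n),a)\mid a=a_\star(u),\ n=h_\star(u)\}$, where $a_\star$ is the smooth function with $\partial_u h(u,a_\star(u))=0$ and $h_\star(u)=h(u,a_\star(u))$. Then $\mathcal{P}$ is partitioned into $$\mathcal{P}^{\mathrm{stab}}=\{(x,a)\in\mathcal P\mid a_\star'(u)>0\}\neq\emptyset,\quad \mathcal{P}^{\mathrm{unst}}=\{(x,a)\in\mathcal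 P\mid a_\star'(u)<0\},\quad \mathcal{P}^{\mathrm{bif}}=\{(x,a)\in\mathcal P\mid a_\star'(u)=0\},$$ where for $(x,a)\in\mathcal P^{\mathrm{stab}}$ the point $x$ is a stable node of $\widetilde{\phi}^{a}$, for $(x,a)\in\mathcal P^{\mathrm{unst}}$ it is a saddle of $\widetilde{\phi}^a$, and for $(x,a)\in\mathcal P^{\mathrm{bif}}$ it is an isolated nonhyperbolic equilibrium of $\widetilde\phi^a$. Moreover the subset $\{((u,n),a)\in\mathcal P^{\mathrm{bif}}\mid a_\star''(u)\neq0\}$ consists of generic fold (saddle-node) bifurcation points of the one-parameter family of flows $\widetilde{\phi}^{a}$.
   Context: Primes denote derivatives with respect to $u$. Explicitly, $a_\star(u)=\dfrac{b_0'(u)c(u)-b_0(u)c'(u)}{b_1'(u)c(u)-b_1(u)c'(u)}$, the denominator being nonzero by the assumption $c'/c>b_1'/b_1$. *)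

From Stdlib Require Import Reals List.
From Coquelicot Require Import Coquelicot.
Open Scope R_scope.

Definition is_C1 (f : R -> R) : Prop :=
  (forall x, ex_derive f x) /\ (forall x, continuous (Derive f) x).

Definition is_smooth (f : R -> R) : Prop :=
  forall (m : nat) (x : R), ex_derive (Derive_n f m) x.

Record mat2 := Mat2 { m11 : R; m12 : R; m21 : R; m22 : R }.

Definition mat2_apply (J : mat2) (h : R * R) : R * R :=
  (m11 J * fst h + m12 J * snd h, m21 J * fst h + m22 J * snd h).

Definition is_eigenvalue (J : mat2) (z : C) : Prop :=
  Cminus (Cmult (Cminus (RtoC (m11 J)) z) (Cminus (RtoC (m22 J)) z))
         (RtoC (m12 J * m21 J)) = RtoC 0.

Definition charpoly (J : mat2) (l : R) : R :=
  (m11 J - l) * (m22 J - l) - m12 J * m21 J.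

Definition has_jacobian (G : R * R -> R * R) (x : R * R) (J : mat2) : Prop :=
  filterdiff G (locally x) (mat2_apply J).

Definition equilibrium (G : R * R -> R * R) (x : R * R) : Prop := G x = (0, 0).

Definition stable_node (G : R * R -> R * R) (x : R * R) : Prop :=
  equilibrium G x /\
  exists J, has_jacobian G x J /\
    forall z : C, is_eigenvalue J z -> Im z = 0 /\ Re z < 0.

Definition saddle (G : R * R -> R * R) (x : R * R) : Prop :=
  equilibrium G x /\
  exists J, has_jacobian G x J /\
    exists l1 l2 : R, l1 < 0 < l2 /\
      is_eigenvalue J (RtoC l1) /\ is_eigenvalue J (RtoC l2).

Definition isolated_equilibrium (G : R * R -> R * R) (x : R * R) : Prop :=
  equilibrium G x /\
  exists d, 0 < d /\ forall y : R * R,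
    Rabs (fst y - fst x) < d -> Rabs (snd y - snd x) < d ->
    equilibrium G y -> y = x.

Definition nonhyperbolic_equilibrium (G : R * R -> R * R) (x : R * R) : Prop :=
  equilibrium G x /\
  exists J, has_jacobian G x J /\
    exists z : C, is_eigenvalue J z /\ Re z = 0.

(** * Generic fold (saddle-node) bifurcation point of a one-parameter family
      F(., a) of planar vector fields (Sotomayor / Kuznetsov conditions):
      - F(x0,a0) = 0;
      - the Jacobian J in x has 0 as a simple eigenvalue (spectrum {0, mu},
        mu <> 0), with right null vector v and left null vector w;
      - transversality: w . dF/da (x0,a0) <> 0;
      - nondegeneracy: w . D^2_x F(x0,a0)(v,v) <> 0, the latter being the
        second derivative of t |-> F(x0 + t v, a0) at t = 0. *)
Definition generic_fold (F : R * R -> R -> R * R) (x0 : R * R) (a0 : R) : Prop :=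
  F x0 a0 = (0, 0) /\
  exists J : mat2, has_jacobian (fun y => F y a0) x0 J /\
  (exists mu, mu <> 0 /\ forall l, charpoly J l = l * (l - mu)) /\
  exists (v w : R * R),
    v <> (0, 0) /\ w <> (0, 0) /\
    mat2_apply J v = (0, 0) /\
    (fst w * m11 J + snd w * m21 J = 0 /\ fst w * m12 J + snd w * m22 J = 0) /\
    (exists Fa : R * R, is_derive (fun a => F x0 a) a0 Fa /\
       fst w * fst Fa + snd w * snd Fa <> 0) /\
    (exists (D1 : R -> R * R) (D2 : R * R),
       locally 0 (fun t => is_derive
          (fun s => F (fst x0 + s * fst v, snd x0 + s * snd v) a0) t (D1 t)) /\
       is_derive D1 0 D2 /\
       fst w * fst D2 + snd w * snd D2 <> 0).

Definition bfun (b0 b1 : R -> R) (u a : R) : R := b0 u - a * b1 u.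
Definition hfun (b0 b1 c : R -> R) (u a : R) : R := bfun b0 b1 u a / c u.

Definition ktilde (k : R -> R) (n : R) : R :=
  if Req_EM_T n 0 then Derive k 0 else k n / n.

Definition ftilde (eps : R) (k b0 b1 c : R -> R) (x : R * R) (a : R) : R * R :=
  let u := fst x in let n := snd x in
  (eps * ((Derive b0 u - a * Derive b1 u) - Derive c u * n),
   / ktilde k n * (bfun b0 b1 u a - c u * n)).

Definition a_star (b0 b1 c : R -> R) (u : R) : R :=
  (Derive b0 u * c u - b0 u * Derive c u) /
  (Derive b1 u * c u - b1 u * Derive c u).

Definition h_star (b0 b1 c : R -> R) (u : R) : R :=
  hfun b0 b1 c u (a_star b0 b1 c u).

(* At an equilibrium (u, h*(u)) with parameter a*(u) both b(u,a) - c(u) n and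
   its u-derivative b_u(u,a) - c'(u) n vanish, so the Jacobian of the reduced field is
   upper triangular with diagonal entries eps (b_uu - c'' n) and -c/k~(n).
   Differentiating a* W(c,b1) = W(c,b0), with W(f,g) = f g' - f' g, turns the first
   entry into eps a*' W(c,b1)/c, and W(c,b1) < 0 is exactly the hypothesis
   c'/c > b1'/b1; the second entry is negative because k~ is continuous, never zero and
   k~(0) = k'(0) > 0. So the sign of a*' decides between stable node, saddle and zero
   eigenvalue. Such equilibria are isolated because h(., a) has finitely many critical
   points, and P^stab is nonempty because h(., 0) tends to -oo at both ends, so
   h_u(., 0) = a* W(c,b1)/c^2 changes sign from + to - and a* from - to +.
   At a fold (a*' = 0) the left null vector (-c/k~, eps c') yields the transversality
   coefficient eps W(c,b1)/k~ and, after one more differentiation, the nondegeneracy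
   coefficient -eps a*'' W(c,b1)/k~. *)

From Stdlib Require Import Reals List Lra Psatz Classical.
From Coquelicot Require Import Coquelicot.
Open Scope R_scope.

Definition is_Cn (m : nat) (f : R -> R) : Prop :=
  forall j, (j <= m)%nat -> forall x, ex_derive (Derive_n f j) x.

Lemma is_smooth_Cn f : is_smooth f <-> forall m, is_Cn m f.
Proof.
  split.
  - intros H m j _ x. apply H.
  - intros H m x. apply (H m m); lia.
Qed.

Lemma is_Cn_ext m f g : (forall x, f x = g x) -> is_Cn m f -> is_Cn m g.
Proof.
  intros E H j Hj x. apply ex_derive_ext with (Derive_n f j).
  - intro t. now apply Derive_n_ext.
  - now apply H.
Qed.

Lemma is_Cn_ex_derive m f : is_Cn m f -> forall x, ex_derive f x.
Proof. intros H x. apply (H 0%nat); lia. Qed.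

Lemma is_Cn_0 f : (forall x, ex_derive f x) -> is_Cn 0 f.
Proof. intros H j Hj x. replace j with 0%nat by lia. apply H. Qed.

Lemma is_Cn_S m f : is_Cn (S m) f <-> (forall x, ex_derive f x) /\ is_Cn m (Derive f).
Proof.
  assert (E : forall j x, Derive_n (Derive f) j x = Derive_n f (S j) x).
  { intros j x. rewrite <- Nat.add_1_r. apply (Derive_n_comp f j 1). }
  split.
  - intro H. split; [now apply is_Cn_ex_derive with (S m)|].
    intros j Hj x. apply ex_derive_ext with (Derive_n f (S j)).
    + intro t. now rewrite E.
    + apply H; lia.
  - intros [H1 H2] [|j] Hj x; [apply H1|].
    apply ex_derive_ext with (Derive_n (Derive f) j).
    + intro t. now rewrite E.
    + apply H2; lia.
Qed.

Lemma is_Cn_le m f : is_Cn (S m) f -> is_Cn m f.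
Proof. intros H j Hj. apply H; lia. Qed.

Lemma is_Cn_const m a : is_Cn m (fun _ => a).
Proof.
  induction m in a |- *.
  - apply is_Cn_0. intro. apply ex_derive_const.
  - apply is_Cn_S. split; [intro; apply ex_derive_const|].
    apply is_Cn_ext with (fun _ => 0); [intro; now rewrite Derive_const|].
    apply IHm.
Qed.

Lemma is_Cn_plus m : forall f g, is_Cn m f -> is_Cn m g -> is_Cn m (fun x => f x + g x).
Proof.
  induction m; intros f g Hf Hg.
  - apply is_Cn_0. intro x.
    apply (ex_derive_plus f g); [apply (is_Cn_ex_derive 0 f Hf)|apply (is_Cn_ex_derive 0 g Hg)].
  - apply is_Cn_S in Hf as [Hf1 Hf2]. apply is_Cn_S in Hg as [Hg1 Hg2].
    apply is_Cn_S. split; [intro x; now apply (ex_derive_plus f g)|].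
    apply is_Cn_ext with (fun x => Derive f x + Derive g x).
    + intro x. now rewrite Derive_plus.
    + now apply IHm.
Qed.

Lemma is_Cn_mult m : forall f g, is_Cn m f -> is_Cn m g -> is_Cn m (fun x => f x * g x).
Proof.
  induction m; intros f g Hf Hg.
  - apply is_Cn_0. intro x.
    apply ex_derive_mult; [apply (is_Cn_ex_derive 0 f Hf)|apply (is_Cn_ex_derive 0 g Hg)].
  - pose proof (is_Cn_le _ _ Hf) as Hf0. pose proof (is_Cn_le _ _ Hg) as Hg0.
    apply is_Cn_S in Hf as [Hf1 Hf2]. apply is_Cn_S in Hg as [Hg1 Hg2].
    apply is_Cn_S. split; [intro x; now apply ex_derive_mult|].
    apply is_Cn_ext with (fun x => Derive f x * g x + f x * Derive g x).
    + intro x. now rewrite Derive_mult.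
    + apply is_Cn_plus; apply IHm; assumption.
Qed.

Lemma is_Cn_minus m f g : is_Cn m f -> is_Cn m g -> is_Cn m (fun x => f x - g x).
Proof.
  intros Hf Hg. apply is_Cn_ext with (fun x => f x + (-1) * g x); [intro; ring|].
  apply is_Cn_plus; [|apply is_Cn_mult; [apply is_Cn_const|]]; assumption.
Qed.

Lemma is_Cn_inv m : forall g, (forall x, g x <> 0) -> is_Cn m g -> is_Cn m (fun x => / g x).
Proof.
  induction m; intros g Hn Hg.
  - apply is_Cn_0. intro x. apply ex_derive_inv; [apply (is_Cn_ex_derive 0 g Hg)|apply Hn].
  - pose proof (is_Cn_le _ _ Hg) as Hg0. apply is_Cn_S in Hg as [Hg1 Hg2].
    apply is_Cn_S. split; [intro x; now apply ex_derive_inv|].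
    apply is_Cn_ext with (fun x => (-1) * Derive g x * (/ g x * / g x)).
    + intro x. rewrite Derive_inv by auto. field. auto.
    + apply is_Cn_mult; [apply is_Cn_mult; [apply is_Cn_const|assumption]|].
      apply is_Cn_mult; apply IHm; assumption.
Qed.

Lemma filterdiff_pair {K : AbsRing} {U V W : NormedModule K} (f : U -> V) (g : U -> W) x lf lg :
  filterdiff f (locally x) lf -> filterdiff g (locally x) lg ->
  filterdiff (fun y => (f y, g y)) (locally x) (fun h => (lf h, lg h)).
Proof.
  intros Hf Hg.
  apply (filterdiff_comp'_2 f g pair x lf lg pair Hf Hg).
  apply filterdiff_ext with (fun t => t); [intros []; reflexivity|].
  apply filterdiff_ext_lin with (fun t => t); [|intros []; reflexivity].
  apply filterdiff_linear, is_linear_id.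
Qed.

Lemma is_derive_pair (f g : R -> R) x l1 l2 : is_derive f x l1 -> is_derive g x l2 ->
  is_derive (fun t => (f t, g t)) x (l1, l2).
Proof. intros H1 H2. exact (filterdiff_pair _ _ _ _ _ H1 H2). Qed.

Lemma filterdiff_locally_lipschitz {K : AbsRing} {U V : NormedModule K} (q : U -> V) x lq :
  filterdiff q (locally x) lq ->
  exists M, 0 < M /\ locally x (fun y => norm (minus (q y) (q x)) <= M * norm (minus y x)).
Proof.
  intros [Hl Hd]. destruct (linear_norm lq Hl) as [M [HM HMb]].
  exists (M + 1). split; [lra|].
  specialize (Hd x (fun P H => H) (mkposreal 1 Rlt_0_1)).
  apply filter_imp with (2 := Hd). intros y Hy; simpl in Hy.
  pose proof (norm_triangle_inv (minus (q y) (q x)) (lq (minus y x))) as T.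
  pose proof (Rle_abs (norm (minus (q y) (q x)) - norm (lq (minus y x)))).
  specialize (HMb (minus y x)). lra.
Qed.

Lemma filterdiff_mult_vanishing {U : NormedModule R_AbsRing} (g q : U -> R) x lq :
  continuous g x -> filterdiff q (locally x) lq -> q x = 0 ->
  filterdiff (fun y => g y * q y) (locally x) (fun h => g x * lq h).
Proof.
  intros Hg Hq Hq0.
  destruct (filterdiff_locally_lipschitz q x lq Hq) as [M [HM Hlip]].
  destruct Hq as [Hl Hd]. split.
  { exact (is_linear_comp lq (scal (g x)) Hl (is_linear_scal_r (g x) Rmult_comm)). }
  intros x' Hx'. apply is_filter_lim_locally_unique in Hx'. subst x'.
  intro eps.
  set (gx := Rabs (g x)).
  set (e1 := eps / (2 * (gx + 1))).
  set (e2 := eps / (2 * M)).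
  assert (Hgx : 0 <= gx) by apply Rabs_pos.
  assert (He1 : 0 < e1) by (apply Rdiv_lt_0_compat; [apply cond_pos|lra]).
  assert (He2 : 0 < e2) by (apply Rdiv_lt_0_compat; [apply cond_pos|lra]).
  assert (He1g : gx * e1 <= eps / 2).
  { unfold e1. apply Rmult_le_reg_r with (2 * (gx + 1)); [lra|].
    field_simplify; [|lra]. pose proof (cond_pos eps). nra. }
  assert (He2M : e2 * M = eps / 2) by (unfold e2; field; lra).
  pose proof (Hd x (fun P H => H) (mkposreal e1 He1)) as Hrem.
  apply filterlim_locally with (eps := mkposreal e2 He2) in Hg.
  apply filter_imp with (2 := filter_and _ _ Hrem (filter_and _ _ Hg Hlip)).
  intros y [Y1 [Y2 Y3]]. simpl in Y1.
  set (N := norm (minus y x)) in *. set (L := lq (minus y x)) in *.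
  change (Rabs (g y * q y - g x * q x - g x * L) <= eps * N).
  change (Rabs (q y - q x - L) <= e1 * N) in Y1.
  change (Rabs (g y - g x) < e2) in Y2.
  change (Rabs (q y - q x) <= M * N) in Y3.
  rewrite Hq0 in *.
  replace (g y * q y - g x * 0 - g x * L)
    with (g x * (q y - 0 - L) + (g y - g x) * (q y - 0)) by ring.
  eapply Rle_trans; [apply Rabs_triang|]. rewrite !Rabs_mult. fold gx.
  assert (HN : 0 <= N) by apply norm_ge_0.
  assert (gx * Rabs (q y - 0 - L) <= gx * (e1 * N)) by (apply Rmult_le_compat_l; lra).
  assert (Rabs (g y - g x) * Rabs (q y - 0) <= e2 * (M * N))
    by (apply Rmult_le_compat; auto using Rabs_pos; lra).
  nra.
Qed.

Lemma filterdiff_comp_fst (phi : R -> R) (x : R * R) d : is_derive phi (fst x) d ->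
  filterdiff (fun y : R * R => phi (fst y)) (locally x) (fun h => fst h * d).
Proof.
  intro H.
  apply (filterdiff_comp' fst phi x fst (fun t => scal t d)); [|exact H].
  apply filterdiff_linear, is_linear_fst.
Qed.

Lemma filterdiff_affine_snd (B C : R -> R) (x : R * R) dB dC :
  is_derive B (fst x) dB -> is_derive C (fst x) dC ->
  filterdiff (fun y : R * R => B (fst y) - C (fst y) * snd y) (locally x)
    (fun h => (dB - dC * snd x) * fst h - C (fst x) * snd h).
Proof.
  intros HB HC.
  eapply filterdiff_ext_lin.
  - apply (filterdiff_minus_fct (fun y => B (fst y)) (fun y => C (fst y) * snd y));
      [apply filterdiff_comp_fst, HB|].
    apply (filterdiff_mult_fct (fun y => C (fst y)) snd x (fun h => fst h * dC) snd Rmult_comm).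
    + apply filterdiff_comp_fst, HC.
    + apply filterdiff_linear, is_linear_snd.
  - intro h. unfold minus, plus, opp, mult; simpl. ring.
Qed.

(* Only continuity is asked of [g] (it will be [/ ktilde k]): the factor it multiplies
   vanishes at [x]. *)
Lemma has_jacobian_planar eps (P Q B C g : R -> R) (x : R * R) dP dQ dB dC :
  is_derive P (fst x) dP -> is_derive Q (fst x) dQ ->
  is_derive B (fst x) dB -> is_derive C (fst x) dC ->
  continuous g (snd x) -> B (fst x) - C (fst x) * snd x = 0 ->
  has_jacobian (fun y => (eps * (P (fst y) - Q (fst y) * snd y),
                          g (snd y) * (B (fst y) - C (fst y) * snd y))) x
    (Mat2 (eps * (dP - dQ * snd x)) (- (eps * Q (fst x)))
          (g (snd x) * (dB - dC * snd x)) (- (g (snd x) * C (fst x)))).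
Proof.
  intros HP HQ HB HC Hg Heq.
  unfold has_jacobian. eapply filterdiff_ext_lin.
  - apply (filterdiff_pair (U := prod_NormedModule R_AbsRing R_NormedModule R_NormedModule)
             (V := R_NormedModule) (W := R_NormedModule)).
    + eapply (filterdiff_scal_r_fct eps (fun y => P (fst y) - Q (fst y) * snd y) _ Rmult_comm).
      apply filterdiff_affine_snd; eassumption.
    + apply (filterdiff_mult_vanishing (fun y => g (snd y))); [| |exact Heq].
      * apply continuous_comp; [apply continuous_snd|exact Hg].
      * apply filterdiff_affine_snd; eassumption.
  - intros [h1 h2]. unfold mat2_apply, scal; simpl. unfold mult; simpl. f_equal; ring.
Qed.

Lemma is_eigenvalue_triangular p q s z :
  is_eigenvalue (Mat2 p q 0 s) z <-> z = RtoC p \/ z = RtoC s.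
Proof.
  unfold is_eigenvalue; simpl. rewrite Rmult_0_r.
  replace (Cminus (Cmult (Cminus (RtoC p) z) (Cminus (RtoC s) z)) (RtoC 0))
    with (Cmult (Cminus (RtoC p) z) (Cminus (RtoC s) z)) by ring.
  split.
  - intro H. destruct (classic (z = RtoC p)) as [|Hp]; [now left|right].
    apply NNPP. intro Hs. revert H.
    apply Cmult_neq_0; apply Cminus_eq_contra; congruence.
  - intros [-> | ->]; ring.
Qed.

Lemma pos_of_continuous_nonvanishing (f : R -> R) :
  (forall x, continuous f x) -> (forall x, f x <> 0) -> 0 < f 0 -> forall x, 0 < f x.
Proof.
  intros Hc Hn H0 x. destruct (Rlt_or_le 0 (f x)) as [|Hx]; [assumption|exfalso].
  destruct (IVT_gen_consistent f 0 x 0 Hc) as [z [_ Hz]].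
  - split; [apply Rle_trans with (f x); [apply Rmin_r|assumption]|].
    apply Rle_trans with (f 0); [lra|apply Rmax_l].
  - exact (Hn z Hz).
Qed.

Lemma ktilde_continuous k : (forall x, ex_derive k x) -> k 0 = 0 ->
  forall n, continuous (ktilde k) n.
Proof.
  intros Hk k0 n. destruct (Req_EM_T n 0) as [->|Hn].
  - apply continuity_pt_filterlim. intros eps He.
    destruct (proj1 (is_derive_Reals k 0 _) (Derive_correct k 0 (Hk 0)) eps He) as [d Hd].
    exists d. split; [apply cond_pos|]. intros x [[_ Hx0] Hx]. simpl in *. unfold R_dist in *.
    rewrite Rminus_0_r in Hx. specialize (Hd x (not_eq_sym Hx0) Hx).
    rewrite Rplus_0_l, k0, Rminus_0_r in Hd.
    unfold ktilde. destruct (Req_EM_T x 0) as [E|_]; [congruence|].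
    destruct (Req_EM_T 0 0) as [_|E]; [exact Hd|congruence].
  - apply continuous_ext_loc with (fun t => k t / t).
    + assert (Hr : 0 < Rabs n) by now apply Rabs_pos_lt.
      exists (mkposreal _ Hr). intros y Hy. unfold ktilde.
      destruct (Req_EM_T y 0) as [->|]; [|reflexivity].
      exfalso. change (Rabs (0 - n) < Rabs n) in Hy.
      rewrite Rminus_0_l, Rabs_Ropp in Hy. lra.
    + apply (ex_derive_continuous (K := R_AbsRing) (V := R_NormedModule)).
      auto_derive. now split.
Qed.

Lemma ktilde_pos k : (forall x, ex_derive k x) -> (forall n, k n = 0 <-> n = 0) ->
  0 < Derive k 0 -> forall n, 0 < ktilde k n.
Proof.
  intros Hk Hk0 Hk'0.
  apply pos_of_continuous_nonvanishing.
  - apply ktilde_continuous; [exact Hk|now apply Hk0].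
  - intros n. unfold ktilde. destruct (Req_EM_T n 0) as [|Hn]; [lra|].
    apply Rmult_integral_contrapositive. split.
    + now rewrite Hk0.
    + now apply Rinv_neq_0_compat.
  - unfold ktilde. destruct (Req_EM_T 0 0); [assumption|congruence].
Qed.

Lemma MVT_Derive (f : R -> R) a b : (forall x, ex_derive f x) -> a < b ->
  exists z, a <= z <= b /\ f b - f a = Derive f z * (b - a).
Proof.
  intros Hf Hab.
  destruct (MVT_gen f a b (Derive f)) as [z [Hz E]].
  - intros x _. now apply Derive_correct.
  - intros x _. apply continuity_pt_filterlim.
    apply (ex_derive_continuous (K := R_AbsRing) (V := R_NormedModule)), Hf.
  - exists z. rewrite Rmin_left, Rmax_right in Hz by lra. now split.
Qed.

Lemma Derive_sign_change_of_lim_m_infty (f : R -> R) : (forall x, ex_derive f x) ->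
  is_lim f p_infty m_infty -> is_lim f m_infty m_infty ->
  exists x1 x2, x1 < x2 /\ 0 < Derive f x1 /\ Derive f x2 < 0.
Proof.
  intros Hf Hp Hm. apply is_lim_spec in Hp, Hm.
  destruct (Hp (f 0)) as [U HU]. destruct (Hm (f 0)) as [L HL].
  set (l := Rmin L 0 - 1). set (u := Rmax U 0 + 1).
  assert (Hl : l < 0) by (pose proof (Rmin_r L 0); unfold l; lra).
  assert (Hu : 0 < u) by (pose proof (Rmax_r U 0); unfold u; lra).
  assert (Hfl : f l < f 0) by (apply HL; pose proof (Rmin_l L 0); unfold l; lra).
  assert (Hfu : f u < f 0) by (apply HU; pose proof (Rmax_l U 0); unfold u; lra).
  destruct (MVT_Derive f l 0 Hf Hl) as [x1 [Hx1 E1]].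
  destruct (MVT_Derive f 0 u Hf Hu) as [x2 [Hx2 E2]].
  assert (D1 : 0 < Derive f x1) by nra.
  assert (D2 : Derive f x2 < 0) by nra.
  exists x1, x2. repeat split; try assumption.
  destruct (Req_dec x1 x2) as [<-|]; lra.
Qed.

Lemma In_isolated (l : list R) x :
  exists d, 0 < d /\ forall y, In y l -> y <> x -> d <= Rabs (y - x).
Proof.
  induction l as [|a l [d [Hd H]]].
  - exists 1. split; [lra|]. intros y [].
  - destruct (Req_dec a x) as [->|Hax].
    + exists d. split; [assumption|]. intros y [->|Hy] Hyx; [congruence|auto].
    + exists (Rmin d (Rabs (a - x))). split.
      * apply Rmin_pos; [assumption|]. apply Rabs_pos_lt. lra.
      * intros y [<-|Hy] Hyx; [apply Rmin_r|].
        eapply Rle_trans; [apply Rmin_l|auto].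
Qed.

Definition wronskian (f g : R -> R) (u : R) : R := f u * Derive g u - Derive f u * g u.

Lemma wronskian_neg f g u : 0 < f u -> 0 < g u ->
  Derive f u / f u > Derive g u / g u -> wronskian f g u < 0.
Proof.
  intros Hf Hg Hfg. unfold wronskian.
  replace (f u * Derive g u - Derive f u * g u)
    with (- (f u * g u) * (Derive f u / f u - Derive g u / g u)) by (field; lra).
  assert (0 < f u * g u) by nra. nra.
Qed.

Lemma a_star_wronskian b0 b1 c u : a_star b0 b1 c u = wronskian c b0 u / wronskian c b1 u.
Proof. unfold a_star, wronskian. f_equal; ring. Qed.

(* [auto_derive] and [Derive_n] produce eta-expanded functions, which [ring] and
   [field] would treat as atoms distinct from their contracted forms. *)
Ltac eta_contract :=
  repeat match goal with |- context [fun x : R => ?f x] => change (fun x : R => f x) with f end.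

Ltac by_smoothness :=
  match goal with
  | H : is_smooth ?f |- ex_derive _ ?x =>
      first [exact (H 0%nat x) | exact (H 1%nat x) | exact (H 2%nat x) | exact (H 3%nat x)]
  end.

Section Model.

Variables b0 b1 c : R -> R.
Hypotheses (Hb0 : is_smooth b0) (Hb1 : is_smooth b1) (Hc : is_smooth c).
Hypotheses (Hcpos : forall u, 0 < c u) (HW : forall u, wronskian c b1 u < 0).

Local Notation ast := (a_star b0 b1 c).
Local Notation hst := (h_star b0 b1 c).

Let c_neq0 u : c u <> 0.
Proof. specialize (Hcpos u). lra. Qed.

Let W_neq0 u : wronskian c b1 u <> 0.
Proof. specialize (HW u). lra. Qed.

(* The j-th u-derivative of b(u,a) - c(u) n; the reduced field at ((u, n), a) is
   (eps * residual 1 a n u, residual 0 a n u / ktilde k n). *)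
Definition residual (j : nat) (a n u : R) : R :=
  Derive_n b0 j u - a * Derive_n b1 j u - Derive_n c j u * n.

Local Notation resid j u := (residual j (ast u) (hst u) u).

Lemma resid_0 u : resid 0 u = 0.
Proof. unfold residual, h_star, hfun, bfun; simpl. field. apply c_neq0. Qed.

Lemma resid_1 u : resid 1 u = 0.
Proof.
  unfold residual, h_star, hfun, bfun; simpl; eta_contract.
  rewrite a_star_wronskian. unfold wronskian in *. field. auto.
Qed.

Lemma ftilde_eq0_iff eps k u n a : eps <> 0 -> ktilde k n <> 0 ->
  ftilde eps k b0 b1 c (u, n) a = (0, 0) <-> a = ast u /\ n = hst u.
Proof.
  intros Heps Hkt. unfold ftilde; simpl. split.
  - intro H. injection H as H1 H2.
    apply Rmult_integral in H1 as [|H1]; [contradiction|].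
    apply Rmult_integral in H2 as [H2|H2]; [exfalso; now apply (Rinv_neq_0_compat _ Hkt)|].
    assert (En : n = hfun b0 b1 c u a).
    { unfold hfun. field_simplify_eq; [lra|apply c_neq0]. }
    assert (E : wronskian c b0 u - a * wronskian c b1 u
                = c u * (Derive b0 u - a * Derive b1 u - Derive c u * n)).
    { rewrite En. unfold hfun, bfun, wronskian. field. apply c_neq0. }
    rewrite H1, Rmult_0_r in E.
    assert (Ea : a = ast u).
    { rewrite a_star_wronskian. field_simplify_eq; [lra|apply W_neq0]. }
    split; [exact Ea|]. now rewrite En, Ea.
  - intros [-> ->]. f_equal.
    + change (eps * resid 1 u = 0). rewrite resid_1. ring.
    + change (/ ktilde k (hst u) * resid 0 u = 0). rewrite resid_0. ring.
Qed.

Lemma is_derive_hfun a u : is_derive (fun v => hfun b0 b1 c v a) u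
  ((Derive b0 u - a * Derive b1 u - Derive c u * hfun b0 b1 c u a) / c u).
Proof.
  unfold hfun, bfun. auto_derive.
  - repeat split; try by_smoothness. apply c_neq0.
  - eta_contract. field. apply c_neq0.
Qed.

Lemma h_star_critical u : Derive (fun v => hfun b0 b1 c v (ast u)) u = 0.
Proof.
  rewrite (is_derive_unique _ _ _ (is_derive_hfun _ u)).
  change (resid 1 u / c u = 0). rewrite resid_1. unfold Rdiv. ring.
Qed.

Lemma is_smooth_a_star : is_smooth ast.
Proof.
  apply is_smooth_Cn. intro m.
  assert (Hsm : forall f, is_smooth f -> is_Cn m f /\ is_Cn m (Derive f)).
  { intros f Hf. split; [now apply is_smooth_Cn|].
    apply (is_Cn_S m f). now apply is_smooth_Cn. }
  destruct (Hsm b0 Hb0), (Hsm b1 Hb1), (Hsm c Hc).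
  apply is_Cn_ext with (fun u => (Derive b0 u * c u - b0 u * Derive c u)
                                 * / (Derive b1 u * c u - b1 u * Derive c u)); [reflexivity|].
  apply is_Cn_mult; [|apply is_Cn_inv].
  - apply is_Cn_minus; apply is_Cn_mult; assumption.
  - intro u. pose proof (W_neq0 u). unfold wronskian in *. lra.
  - apply is_Cn_minus; apply is_Cn_mult; assumption.
Qed.

Lemma Derive_a_star u : Derive ast u * wronskian c b1 u = c u * resid 2 u.
Proof.
  assert (D : is_derive ast u
    ((c u * Derive (Derive b0) u - Derive (Derive c) u * b0 u
      - ast u * (c u * Derive (Derive b1) u - Derive (Derive c) u * b1 u)) / wronskian c b1 u)).
  { pose proof (W_neq0 u). unfold a_star, wronskian in *. auto_derive.
    - repeat split; try by_smoothness. lra.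
    - eta_contract. field. lra. }
  rewrite (is_derive_unique _ _ _ D).
  unfold residual, h_star, hfun, bfun; simpl; eta_contract.
  field. split; [apply c_neq0|apply W_neq0].
Qed.

Lemma is_derive_h_star u : is_derive hst u (- (Derive ast u * b1 u / c u)).
Proof.
  pose proof is_smooth_a_star as Ha.
  unfold h_star, hfun, bfun. auto_derive.
  - repeat split; try by_smoothness. apply c_neq0.
  - eta_contract. transitivity ((resid 1 u - Derive ast u * b1 u) / c u).
    + unfold residual, h_star, hfun, bfun; simpl; eta_contract. field. apply c_neq0.
    + rewrite resid_1. field. apply c_neq0.
Qed.

Lemma resid_2_eq0 u : Derive ast u = 0 -> resid 2 u = 0.
Proof.
  intro H0. pose proof (Derive_a_star u) as E. rewrite H0, Rmult_0_l in E.
  symmetry in E. apply Rmult_integral in E as [E|E]; [now apply c_neq0 in E|exact E].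
Qed.

Lemma is_derive_resid_2 u : is_derive (fun v => resid 2 v) u
  (resid 3 u - Derive ast u * (Derive_n b1 2 u - Derive_n c 2 u * b1 u / c u)).
Proof.
  pose proof is_smooth_a_star as Ha.
  pose proof (is_derive_h_star u) as Hh.
  unfold residual. auto_derive.
  - repeat split; try by_smoothness. now exists (- (Derive ast u * b1 u / c u)).
  - simpl; eta_contract. rewrite (is_derive_unique _ _ _ Hh). field. apply c_neq0.
Qed.

(* Differentiate [Derive_a_star]: at a fold, residual 2 and h*' vanish. *)
Lemma Derive_n_2_a_star u : Derive ast u = 0 ->
  Derive_n ast 2 u * wronskian c b1 u = c u * resid 3 u.
Proof.
  intro H0. pose proof is_smooth_a_star as Ha.
  assert (HL : is_derive (fun v => Derive ast v * wronskian c b1 v) u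
                 (Derive_n ast 2 u * wronskian c b1 u)).
  { unfold wronskian. auto_derive.
    - repeat split; by_smoothness.
    - rewrite H0. simpl; eta_contract. ring. }
  assert (HR : is_derive (fun v => c v * resid 2 v) u (c u * resid 3 u)).
  { pose proof (is_derive_mult c (fun v => resid 2 v) u _ _
      (Derive_correct _ _ (Hc 0%nat u)) (is_derive_resid_2 u) Rmult_comm) as Hr.
    rewrite H0, (resid_2_eq0 u H0) in Hr. unfold mult, plus in Hr; simpl in Hr.
    now rewrite Rmult_0_l, Rmult_0_r, Rplus_0_l, Rminus_0_r in Hr. }
  apply (is_derive_ext _ _ _ _ Derive_a_star) in HL.
  rewrite <- (is_derive_unique _ _ _ HL). now apply is_derive_unique.
Qed.

Lemma resid_2_neg u : 0 < Derive ast u -> resid 2 u < 0.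
Proof.
  intro H. pose proof (Derive_a_star u). pose proof (HW u). pose proof (Hcpos u).
  assert (Derive ast u * wronskian c b1 u < 0) by nra. nra.
Qed.

Lemma resid_2_pos u : Derive ast u < 0 -> 0 < resid 2 u.
Proof.
  intro H. pose proof (Derive_a_star u). pose proof (HW u). pose proof (Hcpos u).
  assert (0 < Derive ast u * wronskian c b1 u) by nra. nra.
Qed.

Lemma exists_Derive_a_star_pos :
  is_lim (fun u => hfun b0 b1 c u 0) p_infty m_infty ->
  is_lim (fun u => hfun b0 b1 c u 0) m_infty m_infty ->
  exists u, Derive ast u > 0.
Proof.
  intros Hp Hm. pose proof is_smooth_a_star as Ha.
  assert (Hh0 : forall u, Derive (fun v => hfun b0 b1 c v 0) u * (c u * c u)
                          = ast u * wronskian c b1 u).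
  { intro u. rewrite (is_derive_unique (fun v : R => hfun b0 b1 c v 0) u _ (is_derive_hfun 0 u)).
    rewrite a_star_wronskian.
    pose proof (W_neq0 u). pose proof (c_neq0 u).
    unfold hfun, bfun, wronskian in *. field. auto. }
  destruct (Derive_sign_change_of_lim_m_infty (fun v : R => hfun b0 b1 c v 0)
              (fun u => ex_intro _ _ (is_derive_hfun 0 u)) Hp Hm) as [x1 [x2 [Hx [D1 D2]]]].
  assert (Hc2 : forall u, 0 < c u * c u) by (intro u; pose proof (Hcpos u); nra).
  assert (A1 : ast x1 < 0).
  { specialize (Hh0 x1). pose proof (HW x1). pose proof (Hc2 x1).
    assert (0 < ast x1 * wronskian c b1 x1) by nra. nra. }
  assert (A2 : ast x2 > 0).
  { specialize (Hh0 x2). pose proof (HW x2). pose proof (Hc2 x2).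
    assert (ast x2 * wronskian c b1 x2 < 0) by nra. nra. }
  destruct (MVT_Derive ast x1 x2 (Ha 0%nat) Hx) as [z [_ E]].
  exists z. nra.
Qed.

Lemma is_derive_residual_shift j a n u t :
  is_derive (fun s => residual j a n (u + s)) t (residual (S j) a n (u + t)).
Proof.
  assert (H : is_derive (residual j a n) (u + t) (residual (S j) a n (u + t))).
  { unfold residual. auto_derive.
    - repeat split; [apply Hb0|apply Hb1|apply Hc].
    - simpl; eta_contract. ring. }
  assert (Hs : is_derive (fun s => u + s) t 1) by (auto_derive; [exact I|ring]).
  pose proof (is_derive_comp _ _ t _ _ H Hs) as Hr.
  rewrite <- (scal_one (residual (S j) a n (u + t))). exact Hr.
Qed.

Section Flow.

Variables (eps : R) (k : R -> R).
Hypotheses (Heps : 0 < eps) (Hk : forall x, ex_derive k x).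
Hypotheses (Hk0 : forall n, k n = 0 <-> n = 0) (Hk'0 : 0 < Derive k 0).

Local Notation F := (ftilde eps k b0 b1 c).

Let kt_pos n : 0 < ktilde k n := ktilde_pos k Hk Hk0 Hk'0 n.

Lemma F_eq0_iff u n a : F (u, n) a = (0, 0) <-> a = ast u /\ n = hst u.
Proof.
  apply ftilde_eq0_iff; [lra|]. specialize (kt_pos n). lra.
Qed.

Lemma has_jacobian_F u : has_jacobian (fun y => F y (ast u)) (u, hst u)
  (Mat2 (eps * resid 2 u) (- (eps * Derive c u)) 0 (- (/ ktilde k (hst u) * c u))).
Proof.
  set (a := ast u).
  assert (HP : is_derive (fun v => Derive b0 v - a * Derive b1 v) u
                 (Derive_n b0 2 u - a * Derive_n b1 2 u)).
  { auto_derive; [repeat split; by_smoothness|simpl; eta_contract; ring]. }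
  assert (HB : is_derive (fun v => bfun b0 b1 v a) u (Derive b0 u - a * Derive b1 u)).
  { unfold bfun. auto_derive; [repeat split; by_smoothness|eta_contract; ring]. }
  assert (Hg : continuous (fun n => / ktilde k n) (hst u)).
  { apply continuous_Rinv_comp.
    - apply ktilde_continuous; [exact Hk|now apply Hk0].
    - specialize (kt_pos (hst u)). lra. }
  pose proof (has_jacobian_planar eps _ (Derive c) _ c _ (u, hst u) _ _ _ _ HP
    (Derive_correct _ _ (Hc 1%nat u)) HB (Derive_correct _ _ (Hc 0%nat u)) Hg (resid_0 u)) as J.
  replace 0 with (/ ktilde k (hst u) * resid 1 u) by (rewrite resid_1; ring).
  exact J.
Qed.


Let jacobian_m22_neg u : - (/ ktilde k (hst u) * c u) < 0.
Proof.
  pose proof (Rinv_0_lt_compat _ (kt_pos (hst u))). pose proof (Hcpos u). nra.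
Qed.

Lemma stable_node_F u : 0 < Derive ast u -> stable_node (fun y => F y (ast u)) (u, hst u).
Proof.
  intro H. split; [now apply F_eq0_iff|].
  eexists. split; [apply has_jacobian_F|].
  intros z Hz. apply is_eigenvalue_triangular in Hz as [-> | ->]; simpl; split; try reflexivity.
  - pose proof (resid_2_neg u H). nra.
  - apply jacobian_m22_neg.
Qed.

Lemma saddle_F u : Derive ast u < 0 -> saddle (fun y => F y (ast u)) (u, hst u).
Proof.
  intro H. split; [now apply F_eq0_iff|].
  eexists. split; [apply has_jacobian_F|].
  exists (- (/ ktilde k (hst u) * c u)), (eps * resid 2 u).
  split; [split; [apply jacobian_m22_neg|pose proof (resid_2_pos u H); nra]|].
  split; apply is_eigenvalue_triangular; auto.
Qed.

Lemma nonhyperbolic_F u : Derive ast u = 0 ->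
  nonhyperbolic_equilibrium (fun y => F y (ast u)) (u, hst u).
Proof.
  intro H. split; [now apply F_eq0_iff|].
  eexists. split; [apply has_jacobian_F|].
  exists (eps * resid 2 u). split; [apply is_eigenvalue_triangular; auto|].
  simpl. rewrite (resid_2_eq0 u H). ring.
Qed.

Lemma isolated_F u :
  (exists l, forall v, Derive (fun w => hfun b0 b1 c w (ast u)) v = 0 -> In v l) ->
  isolated_equilibrium (fun y => F y (ast u)) (u, hst u).
Proof.
  intros [l Hl]. split; [now apply F_eq0_iff|].
  destruct (In_isolated l u) as [d [Hd Hiso]].
  exists d. split; [exact Hd|]. intros [v n] Hv _ Hy. simpl in Hv.
  apply F_eq0_iff in Hy as [Ea ->].
  destruct (Req_dec v u) as [->|Hne]; [reflexivity|exfalso].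
  assert (Hin : In v l) by (apply Hl; rewrite Ea; apply h_star_critical).
  specialize (Hiso v Hin Hne). lra.
Qed.

Lemma is_derive_F_param x a : is_derive (fun a => F x a) a
  (eps * - Derive b1 (fst x), / ktilde k (snd x) * - b1 (fst x)).
Proof. unfold ftilde, bfun. apply is_derive_pair; auto_derive; auto; ring. Qed.

Lemma is_derive_F_along_u u n a t :
  is_derive (fun s => F (u + s * 1, n + s * 0) a) t
    (eps * residual 2 a n (u + t), / ktilde k n * residual 1 a n (u + t)).
Proof.
  apply is_derive_ext
    with (fun s => (eps * residual 1 a n (u + s), / ktilde k n * residual 0 a n (u + s))).
  { intro s. now rewrite Rmult_1_r, Rmult_0_r, Rplus_0_r. }
  apply is_derive_pair; apply is_derive_scal, is_derive_residual_shift.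
Qed.

Lemma generic_fold_F u : Derive ast u = 0 -> Derive_n ast 2 u <> 0 ->
  generic_fold F (u, hst u) (ast u).
Proof.
  intros H1 H2.
  assert (H3 : resid 3 u <> 0).
  { intro E. apply (Rmult_integral_contrapositive _ _ (conj H2 (W_neq0 u))).
    rewrite Derive_n_2_a_star, E by exact H1. ring. }
  split; [now apply F_eq0_iff|].
  eexists. split; [apply has_jacobian_F|]. rewrite (resid_2_eq0 u H1), Rmult_0_r.
  assert (Hkt : 0 < ktilde k (hst u)) by apply kt_pos.
  set (kt := ktilde k (hst u)) in *.
  set (s := - (/ kt * c u)).
  assert (Hs : s < 0).
  { pose proof (Hcpos u). pose proof (Rinv_0_lt_compat _ Hkt). unfold s. nra. }
  split; [exists s; split; [lra|intro l; unfold charpoly; simpl; ring]|].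
  exists (1, 0), (s, eps * Derive c u).
  split; [intro E; injection E; lra|].
  split; [intro E; injection E; lra|].
  split; [unfold mat2_apply; simpl; f_equal; ring|].
  split; [simpl; split; ring|].
  split.
  - eexists. split; [apply is_derive_F_param|]. simpl; fold kt.
    replace (s * (eps * - Derive b1 u) + eps * Derive c u * (/ kt * - b1 u))
      with (eps * / kt * wronskian c b1 u) by (unfold s, wronskian; ring).
    apply Rmult_integral_contrapositive. split; [|apply W_neq0].
    apply Rmult_integral_contrapositive. split; [lra|]. apply Rinv_neq_0_compat. lra.
  - exists (fun t => (eps * residual 2 (ast u) (hst u) (u + t),
                       / kt * residual 1 (ast u) (hst u) (u + t))).
    exists (eps * residual 3 (ast u) (hst u) (u + 0), / kt * residual 2 (ast u) (hst u) (u + 0)).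
    split; [apply filter_forall; intro t; apply is_derive_F_along_u|].
    split; [apply is_derive_pair; apply is_derive_scal, is_derive_residual_shift|].
    simpl. rewrite Rplus_0_r, (resid_2_eq0 u H1).
    replace (s * (eps * resid 3 u) + eps * Derive c u * (/ kt * 0))
      with (s * eps * resid 3 u) by ring.
    apply Rmult_integral_contrapositive. split; [|exact H3].
    apply Rmult_integral_contrapositive. split; lra.
Qed.

End Flow.

End Model.

Theorem lemma2 (eps : R) (k b0 b1 c : R -> R)
  (Heps : 0 < eps)
  (Hk : is_C1 k) (Hk0 : forall n, k n = 0 <-> n = 0) (Hk'0 : 0 < Derive k 0)
  (Hb0 : is_smooth b0) (Hb1 : is_smooth b1) (Hc : is_smooth c)
  (Hb1pos : forall u, 0 < b1 u) (Hb1' : forall u, Derive b1 u < 0)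
  (Hcpos : forall u, 0 < c u)
  (Hcb : forall u, Derive c u / c u > Derive b1 u / b1 u)
  (Hcrit : forall a, exists l : list R, forall u,
       Derive (fun v => hfun b0 b1 c v a) u = 0 -> In u l)
  (Hinf : forall a, 0 <= a ->
       is_lim (fun u => hfun b0 b1 c u a) p_infty m_infty /\
       is_lim (fun u => hfun b0 b1 c u a) m_infty m_infty) :
  let F := ftilde eps k b0 b1 c in
  let ast := a_star b0 b1 c in
  let hst := h_star b0 b1 c in
  (* a_star is the smooth function with  d/du h(u, a_star u) = 0 *)
  is_smooth ast /\
  (forall u, Derive (fun v => hfun b0 b1 c v (ast u)) u = 0) /\
  (* description of P *)
  (forall u n a, F (u, n) a = (0, 0) <-> (a = ast u /\ n = hst u)) /\
  (* P^stab is nonempty *)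
  (exists u, Derive ast u > 0) /\
  (* classification *)
  (forall u, Derive ast u > 0 -> stable_node (fun y => F y (ast u)) (u, hst u)) /\
  (forall u, Derive ast u < 0 -> saddle (fun y => F y (ast u)) (u, hst u)) /\
  (forall u, Derive ast u = 0 ->
      isolated_equilibrium (fun y => F y (ast u)) (u, hst u) /\
      nonhyperbolic_equilibrium (fun y => F y (ast u)) (u, hst u)) /\
  (* generic folds *)
  (forall u, Derive ast u = 0 -> Derive_n ast 2 u <> 0 ->
      generic_fold F (u, hst u) (ast u)).
Proof.
  intros F ast hst.
  assert (HW : forall u, wronskian c b1 u < 0) by (intro u; now apply wronskian_neg).
  destruct Hk as [Hkd _].
  destruct (Hinf 0 (Rle_refl 0)) as [Hp Hm].
  split; [now apply is_smooth_a_star|].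
  split; [intro u; now apply h_star_critical|].
  split; [intros u n a; now apply F_eq0_iff|].
  split; [now apply exists_Derive_a_star_pos|].
  split; [intros u Hu; now apply stable_node_F|].
  split; [intros u Hu; now apply saddle_F|].
  split; [intros u Hu; split; [now apply isolated_F|now apply nonhyperbolic_F]|].
  intros u H1 H2. now apply generic_fold_F.
Qed.
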